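(* Let $p$ be a prime and let $G$ be a finite group with $G=PN$, where $P\in\mathrm{Syl}_p(G)$, $N\trianglelefteq G$ and $\gcd(|P|,|N|)=1$. If $x\in P$, then $|x^G|\leq \nu_p(G)|x^P|$, with equality if and only if $P$ is the unique Sylow $p$-subgroup of $G$ containing $x$.
   Context: $x^G$ (resp. $x^P$) denotes the conjugacy class of $x$ in $G$ (resp. in $P$), $\mathrm{Syl}_p(G)$ the set of Sylow $p$-subgroups of $G$, and $\nu_p(G)=|\mathrm{Syl}_p(G)|$. *)

From mathcomp Require Import all_boot all_fingroup all_solvable.

From mathcomp Require Import all_boot all_fingroup all_solvable.
Set Implicit Arguments.
Unset Strict Implicit.
Unset Printing Implicit Defensive.

(* Count the pairs (y, Q) with y in x^G and Q a Sylow p-subgroup containing y.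
   As P is a complement to the normal subgroup N, elements of P that are
   conjugate in G = PN are already conjugate in P (for h in P, n in N with
   (x^h)^n in P, the commutator [x^h, n] lies in P and N, hence is trivial), so
   each Sylow subgroup P^g meets x^G in exactly |x^P| elements.  Conjugation
   permutes the Sylow subgroups, so every y in x^G lies in the same number m >= 1
   of them as x.  Hence |x^G| m = nu_p(G) |x^P|, and equality holds iff m = 1. *)

Lemma sum_card_incident (I T : finType) (A : {set T}) (B : {set I})
    (S : I -> {set T}) :
  \sum_(y in A) #|[set i in B | y \in S i]| = \sum_(i in B) #|A :&: S i|.
Proof.
rewrite (eq_bigr (fun y => \sum_(i | (i \in B) && (y \in S i)) 1)); last first.
  by move=> y _; rewrite sum1dep_card.
rewrite (exchange_big_dep (mem B)) /=; last by move=> y i _ /andP[].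
apply: eq_bigr => i Bi; rewrite sum1dep_card.
by apply: eq_card => y; rewrite !inE Bi.
Qed.

Lemma card_eq1_memP (T : finType) (A : {set T}) a :
  a \in A -> reflect {in A, forall b, b = a} (#|A| == 1).
Proof.
move=> Aa; have A_gt0 : 0 < #|A| by apply/card_gt0P; exists a.
rewrite eqn_leq A_gt0 andbT.
apply: (iffP card_le1_eqP) => [eqA b Ab | eqA b c Ab Ac]; first exact: eqA.
by rewrite (eqA b Ab) (eqA c Ac).
Qed.

Section ClassesAndSylows.

Local Open Scope group_scope.

Variable gT : finGroupType.
Implicit Types (G H K : {group gT}) (A : {set gT}) (x y g : gT).

Lemma classI_complement H K x :
  H \subset 'N(K) -> H :&: K = 1 -> x \in H -> x ^: (H * K) :&: H = x ^: H.
Proof.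
move=> nKH tiHK xH; apply/eqP; rewrite eqEsubset subsetI class_subG //.
rewrite imsetS ?mulG_subl //= andbT.
apply/subsetP=> _ /setIP[/imsetP[_ /mulsgP[h k hH kK ->] ->] xhkH].
have xhH : x ^ h \in H by rewrite groupJ.
have comm_in_K : [~ x ^ h, k] \in K.
  by apply: subsetP (mem_commg xhH kK); rewrite commg_subr.
have comm_in_H : [~ x ^ h, k] \in H by rewrite groupM ?groupV -?conjgM.
have /conjg_fixP fix_k : [~ x ^ h, k] == 1.
  by apply/eqP/set1gP; rewrite -tiHK inE comm_in_H.
by rewrite conjgM fix_k memJ_class.
Qed.

Lemma card_classIJ G A x g : g \in G -> #|x ^: G :&: A :^ g| = #|x ^: G :&: A|.
Proof. by move=> gG; rewrite -{1}(classGidr x gG) -conjIg cardJg. Qed.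

Definition Syl_at p G y := [set Q in 'Syl_p(G) | y \in Q].

Lemma card_Syl_atJ p G y g : g \in G -> #|Syl_at p G (y ^ g)| = #|Syl_at p G y|.
Proof.
move=> gG; rewrite -(card_preimset _ (act_inj 'JG g)).
apply: eq_card => Q; rewrite !inE /= memJ_conjg.
by rewrite -{1}(conjGid gG) pHallJ2.
Qed.

Section NormalComplement.

Variables (p : nat) (G P N : {group gT}) (x : gT).
Hypotheses (sylP : p.-Sylow(G) P) (nsNG : N <| G) (defG : P * N = G).
Hypotheses (coPN : coprime #|P| #|N|) (xP : x \in P).

Lemma card_classI_Syl Q : Q \in 'Syl_p(G) -> #|x ^: G :&: Q| = #|x ^: P|.
Proof.
rewrite inE => sylQ.
have [g gG ->] := Sylow_trans sylP sylQ.
rewrite card_classIJ // -defG classI_complement ?coprime_TIg //.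
by rewrite (subset_trans (pHall_sub sylP)) ?normal_norm.
Qed.

Lemma card_class_Syl_at :
  (#|x ^: G| * #|Syl_at p G x| = #|'Syl_p(G)| * #|x ^: P|)%N.
Proof.
rewrite -sum_nat_const.
transitivity (\sum_(y in x ^: G) #|Syl_at p G y|).
  by apply: eq_bigr => _ /imsetP[g gG ->]; rewrite card_Syl_atJ.
rewrite sum_card_incident -sum_nat_const.
by apply: eq_bigr => Q sylQ; rewrite card_classI_Syl.
Qed.

End NormalComplement.

End ClassesAndSylows.

Theorem lemma3p1 (gT : finGroupType) (p : nat) (G P N : {group gT}) (x : gT) :
  prime p ->
  P \in 'Syl_p(G)%g ->
  (N <| G)%g ->
  (P * N)%g = G ->
  coprime #|P| #|N| ->
  x \in P ->
  (#|(x ^: G)%g| <= #|'Syl_p(G)%g| * #|(x ^: P)%g|)%N /\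
  (#|(x ^: G)%g| = #|'Syl_p(G)%g| * #|(x ^: P)%g| :> nat <->
     (forall Q : {group gT}, Q \in 'Syl_p(G)%g -> x \in Q -> Q = P)).
Proof.
move=> _ sylP nsNG defG coPN xP.
have PSyl_x : P \in Syl_at p G x by rewrite inE sylP.
have class_gt0 : 0 < #|(x ^: G)%g| by apply/card_gt0P; exists x; apply: class_refl.
rewrite inE in sylP; rewrite -(card_class_Syl_at sylP nsNG defG coPN xP).
split; first by rewrite leq_pmulr //; apply/card_gt0P; exists P.
rewrite -{1}(muln1 #|(x ^: G)%g|).
split=> [/eqP | uniqP].
  rewrite eqn_pmul2l // eq_sym => /(card_eq1_memP PSyl_x) uniqP Q sylQ xQ.
  by apply: uniqP; rewrite inE sylQ.
apply/eqP; rewrite eqn_pmul2l // eq_sym; apply/(card_eq1_memP PSyl_x) => Q.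
by rewrite inE => /andP[]; apply: uniqP.
Qed.
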